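(* Let $(\mathcal{U},\mathcal{S},k)$ be a Set Cover instance with $\mathcal{U}=\bigcup_{A\in\mathcal{S}}A$, let $x\ge1$, $0<y\le1$, and let $\mathcal{G}$ be the fitness graph constructed below, with $n=|V|$. Let $X\subseteq V$ be a configuration such that the sets in $X\cap V_1$ cover $V_2$. Then, starting from $X$, the Heterogeneous Moran process reaches a configuration $X^*$ with $V_2\cup(X\cap V_1)\subseteq X^*$ with probability at least $\left(\frac{x/n}{x/n+n}\right)^{|V_2|}$.
   Context: Construction: $V=V_1\cup V_2$ with $V_1=\mathcal{S}$ and $V_2=\mathcal{U}$; $E=\{(A,v)\in V_1\times V_2: v\in A\}\cup(V_2\times V_1)$; $w(u,v)=1/d(u)$ for $(u,v)\in E$, $d(u)$ the out-degree of $u$. Resident fitness $r\equiv1$; mutant fitness $m(u)=x$ on $V_1$ and $m(u)=y$ on $V_2$. For a configuration (set of mutants) $X$, $f_X(u)=m(u)$ if $u\in X$, else $r(u)$. The Heterogeneous Moran process: from configuration $X$, pick $u$ with probability $f_X(u)/\sum_v f_X(v)$, then $v$ with probability $w(u,v)$, and $v$ takes the type of $u$. *)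

From HB Require Import structures.
From mathcomp Require Import all_boot all_order all_algebra.
From mathcomp Require Import classical_sets reals.
Set Implicit Arguments. Unset Strict Implicit. Unset Printing Implicit Defensive.
Import Order.TTheory GRing.Theory Num.Theory.
Local Open Scope ring_scope.

(* Vertices V, weights w u v (w u v = 1/d(u) on edges, 0 otherwise), fitness
   f X u of vertex u in configuration X (set of mutants).  One step from X:
   pick u with probability f X u / sum_z f X z, then v with probability w u v,
   and v takes the type of u (if u has no out-edge, i.e. sum_v w u v = 0,
   nothing happens).  [moran_reach Tgt t X] is the probability that the
   process started at X is in a configuration satisfying Tgt at some time <= t. *)
Fixpoint moran_reach (R : realType) (V : finType) (w : V -> V -> R)
    (f : {set V} -> V -> R) (Tgt : pred {set V}) (t : nat) (X : {set V}) : R :=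
  match t with
  | 0 => (Tgt X)%:R
  | t'.+1 =>
      if Tgt X then 1 else
      \sum_(u : V) (f X u / \sum_(z : V) f X z) *
        (\sum_(v : V) w u v *
             moran_reach w f Tgt t' (if u \in X then v |: X else X :\ v)
         + (1 - \sum_(v : V) w u v) * moran_reach w f Tgt t' X)
  end.

Definition moran_hit (R : realType) (V : finType) (w : V -> V -> R)
    (f : {set V} -> V -> R) (Tgt : pred {set V}) (X : {set V}) : R :=
  sup [set moran_reach w f Tgt t X | t in [set: nat]]%classic.

(* Universe U (a finType; the hypothesis U = union of S is stated in the theorem),
   family S of subsets.  V1 = S, V2 = U, V = V1 + V2. *)
Definition V1 (U : finType) (S : {set {set U}}) := {A : {set U} | A \in S}.
Definition vert (U : finType) (S : {set {set U}}) := (V1 S + U)%type.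

Definition sc_edge (U : finType) (S : {set {set U}}) (u v : vert S) : bool :=
  match u, v with
  | inl A, inr e => e \in val A
  | inr _, inl _ => true
  | _, _ => false
  end.

Definition sc_outdeg (U : finType) (S : {set {set U}}) (u : vert S) : nat :=
  #|[pred v | sc_edge u v]|.

Definition sc_w (R : realType) (U : finType) (S : {set {set U}}) (u v : vert S) : R :=
  if sc_edge u v then (sc_outdeg u)%:R^-1 else 0.

Definition sc_fit (R : realType) (U : finType) (S : {set {set U}}) (x y : R)
    (X : {set vert S}) (u : vert S) : R :=
  if u \in X then (match u with inl _ => x | inr _ => y end) else 1.

Definition sc_target (U : finType) (S : {set {set U}}) (X : {set vert S}) :
    pred {set vert S} :=
  fun Xs => [forall e : U, inr e \in Xs] &&
            [forall A : V1 S, (inl A \in X) ==> (inl A \in Xs)].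

From HB Require Import structures.
From mathcomp Require Import all_boot all_order all_algebra.
From mathcomp Require Import classical_sets reals topology normedtype sequences.
From mathcomp Require Import lra ring.
Import Order.TTheory GRing.Theory Num.Theory numFieldNormedType.Exports.
Local Open Scope ring_scope.
Set Implicit Arguments. Unset Strict Implicit. Unset Printing Implicit Defensive.

(* Let k(Y) be the number of elements of V2 outside the configuration Y, and
   restrict attention to configurations Y containing the mutant sets X ∩ V1.
   Pick an element e outside Y and a mutant set A ∋ e in X.  With total
   fitness F, one step makes A invade e with probability q >= x/(F n), and
   only a resident (probability b <= n/F) can make the process leave the
   admissible configurations or undo progress; every other step keeps Y
   admissible and does not increase k.  These rates satisfy
   p b <= (1 - p) q for p = (x/n)/(x/n + n), so covering e "beats" the bad
   events with odds p, and the whole of V2 gets covered with probability at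
   least p^k.  To handle the hitting probability as a supremum over finite
   horizons, one proves by induction on t that the t-step probability is at
   least max(p^k - mu^t, 0) with mu = 1 - (1 - p)/n^2 < 1, and lets t go to
   infinity. *)

Lemma le_of_forall_sub_expr_le (R : realType) (a b m : R) :
  0 <= m < 1 -> (forall t, a - m ^+ t <= b) -> a <= b.
Proof.
case/andP=> m0 m1 le_ab.
have am_cvg : ((a - m ^+ t) @[t --> \oo] --> a)%classic.
  rewrite -[X in (_ --> X)%classic]subr0; apply: cvgB; first exact: cvg_cst.
  by apply: cvg_expr; rewrite ger0_norm.
apply: (ler_cvg_to am_cvg (cvg_cst b)).
by apply: nearW.
Qed.

Definition reach_bound (R : realDomainType) (p m : R) (t k : nat) : R :=
  Num.max (p ^+ k - m ^+ t) 0.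

Lemma reach_bound0 (R : realDomainType) (p m : R) k :
  0 <= p <= 1 -> reach_bound p m 0 k = 0.
Proof.
by case/andP=> p0 p1; apply/max_idPr; rewrite expr0 subr_le0 exprn_ile1.
Qed.

Lemma reach_bound_le1 (R : realDomainType) (p m : R) t k :
  0 <= p <= 1 -> 0 <= m -> reach_bound p m t k <= 1.
Proof.
case/andP=> p0 p1 m0; rewrite /reach_bound ge_max ler01 andbT.
by rewrite (le_trans _ (exprn_ile1 k p0 p1)) // gerDl oppr_le0 exprn_ge0.
Qed.

Lemma reach_bound_homo (R : realDomainType) (p m : R) t k1 k2 :
  0 <= p <= 1 -> (k1 <= k2)%N -> reach_bound p m t k2 <= reach_bound p m t k1.
Proof.
case/andP=> p0 p1 k12; rewrite /reach_bound ge_max !le_max lexx !orbT andbT.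
by rewrite lerD2r ler_wiXn2l.
Qed.

Lemma decay_ge0 (R : realDomainType) (p g : R) :
  0 <= p <= 1 -> 0 <= g <= 1 -> 0 <= 1 - (1 - p) * g.
Proof.
by case/andP=> p0 p1 /andP[g0 g1]; rewrite subr_ge0 mulr_ile1 ?subr_ge0 ?gerBl.
Qed.

Lemma decay_lt1 (R : realDomainType) (p g : R) : p < 1 -> 0 < g -> 1 - (1 - p) * g < 1.
Proof. by move=> p1 g0; rewrite gtrDl oppr_lt0 mulr_gt0 ?subr_gt0. Qed.

Lemma reach_bound_step (R : realFieldType) (p g b q m : R) t k :
  0 < p <= 1 -> 0 <= g <= 1 -> m = 1 - (1 - p) * g ->
  p * g <= q -> 0 <= b <= 1 -> p * b <= (1 - p) * q ->
  reach_bound p m t.+1 k.+1 <=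
    (1 - b) * reach_bound p m t k.+1 + q * (reach_bound p m t k - reach_bound p m t k.+1).
Proof.
move=> /andP[p0 p1] g01 m_def pg_q /andP[b0 b1] pb_q.
have m0 : 0 <= m by rewrite m_def decay_ge0 // ltW.
case/andP: g01 => g0 g1.
rewrite /reach_bound exprS [m ^+ t.+1]exprS; set P1 := p ^+ k; set nu := m ^+ t.
have P10 : 0 <= P1 by rewrite exprn_ge0 ?ltW.
have nu0 : 0 <= nu by rewrite exprn_ge0.
have q0 : 0 <= q := le_trans (mulr_ge0 (ltW p0) g0) pg_q.
have loss : 0 <= (1 - p) * (1 - g) * nu by rewrite !mulr_ge0 ?subr_ge0.
have pP1 : p * P1 <= P1 by rewrite ler_piMl.
rewrite m_def; have [P1_le_nu|nu_lt_P1] := leP P1 nu.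
  have pP1_le : p * P1 <= p * nu := ler_wpM2l (ltW p0) P1_le_nu.
  rewrite [Num.max (P1 - nu) 0]max_r ?subr_le0 //.
  rewrite [Num.max (p * P1 - nu) 0]max_r ?subr_le0 ?(le_trans pP1) //.
  by rewrite mulr0 subrr mulr0 addr0 ge_max lexx andbT; nra.
have [nu_le_P|P_lt_nu] := leP nu (p * P1).
  have lag0 : 0 <= (1 - p) * g * nu by rewrite !mulr_ge0 ?subr_ge0.
  rewrite max_l; last by lra.
  rewrite !max_l ?subr_ge0 ?(le_trans nu_le_P) //.
  have pb_scaled : p * b * (p * P1 - nu) <= (1 - p) * q * (p * P1 - nu).
    by rewrite ler_wpM2r ?subr_ge0.
  have pg_scaled : (1 - p) * (p * g) * nu <= (1 - p) * q * nu.
    by rewrite ler_wpM2r // ler_wpM2l ?subr_ge0.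
  rewrite -(ler_pM2l p0); lra.
rewrite [Num.max (p * P1 - nu) 0]max_r ?subr_le0 ?(ltW P_lt_nu) //.
rewrite [Num.max (P1 - nu) 0]max_l ?subr_ge0 ?(ltW nu_lt_P1) // mulr0 add0r subr0.
rewrite ge_max mulr_ge0 ?subr_ge0 ?(ltW nu_lt_P1) // andbT.
have gain : 0 <= (q - p * g) * (P1 - nu) by rewrite mulr_ge0 ?subr_ge0 ?(ltW nu_lt_P1).
have slack : 0 <= (1 - g) * (nu - p * P1) by rewrite mulr_ge0 ?subr_ge0 ?(ltW P_lt_nu).
lra.
Qed.

Definition cover_prob (R : numFieldType) (x n : R) : R := (x / n) / (x / n + n).

Section CoverProb.
Variable R : realFieldType.

Lemma cover_prob_ge0_le1 (x n : R) : 0 <= x -> 0 <= n -> 0 <= cover_prob x n <= 1.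
Proof.
move=> x0 n0; have a0 : 0 <= x / n by rewrite divr_ge0.
rewrite /cover_prob divr_ge0 ?addr_ge0 //=.
have [->|s0] := eqVneq (x / n + n) 0; first by rewrite invr0 mulr0 ler01.
by rewrite ler_pdivrMr ?mul1r ?lerDl // lt_def s0 addr_ge0.
Qed.

Lemma cover_prob_gt0_lt1 (x n : R) : 0 < x -> 0 < n -> 0 < cover_prob x n < 1.
Proof.
move=> x0 n0; have a0 : 0 < x / n by rewrite divr_gt0.
by rewrite /cover_prob divr_gt0 ?addr_gt0 //= ltr_pdivrMr ?addr_gt0 // mul1r ltrDl.
Qed.

Lemma inv_sqr_le_rate (x n F q : R) :
  0 < n -> 0 < F -> F <= x * n -> n^-1 <= q -> (n * n)^-1 <= x / F * q.
Proof.
move=> n0 F0 Fxn nq; have n'0 : 0 <= n^-1 by rewrite invr_ge0 ltW.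
rewrite invfM; apply: ler_pM => //.
by rewrite ler_pdivlMr // ler_pdivrMl // mulrC.
Qed.

Lemma cover_prob_balance (x n F q b : R) :
  0 < x -> 0 < n -> 0 < F -> n^-1 <= q -> b <= n / F ->
  cover_prob x n * b <= (1 - cover_prob x n) * (x / F * q).
Proof.
move=> x0 n0 F0 nq bnF; have /andP[p0 p1] := cover_prob_gt0_lt1 x0 n0.
have balance : cover_prob x n * (n / F) = (1 - cover_prob x n) * (x / F * n^-1).
  rewrite /cover_prob; field.
  by rewrite !gt_eqF ?addr_gt0 ?mulr_gt0 // ltr_wpDr ?mulr_ge0 ?ltW.
apply: le_trans (ler_wpM2l (ltW p0) bnF) _; rewrite balance.
apply: ler_wpM2l; first by rewrite subr_ge0 ltW.
by apply: ler_wpM2l => //; rewrite divr_ge0 // ltW.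
Qed.

End CoverProb.

Section MoranStep.
Variables (R : realType) (V : finType) (w : V -> V -> R) (f : {set V} -> V -> R).

Definition moran_jump (r : {set V} -> R) (X : {set V}) (u : V) : R :=
  \sum_v w u v * r (if u \in X then v |: X else X :\ v) + (1 - \sum_v w u v) * r X.

Definition moran_step (r : {set V} -> R) (X : {set V}) : R :=
  \sum_u (f X u / \sum_z f X z) * moran_jump r X u.

Lemma moran_reachS Tgt t X :
  moran_reach w f Tgt t.+1 X = if Tgt X then 1 else moran_step (moran_reach w f Tgt t) X.
Proof. by []. Qed.

Hypotheses (w_ge0 : forall u v, 0 <= w u v) (w_sum_le1 : forall u, \sum_v w u v <= 1).
Hypothesis f_ge0 : forall X u, 0 <= f X u.

Lemma moran_jump_bounds r X u :
  (forall Y, 0 <= r Y <= 1) -> 0 <= moran_jump r X u <= 1.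
Proof.
move=> r01; have s1 := w_sum_le1 u.
have [rX0 rX1] := andP (r01 X).
pose Z v := if u \in X then v |: X else X :\ v.
have moved0 : 0 <= \sum_v w u v * r (Z v).
  by apply: sumr_ge0 => v _; rewrite mulr_ge0 //; case/andP: (r01 (Z v)).
have moved1 : \sum_v w u v * r (Z v) <= \sum_v w u v.
  by apply: ler_sum => v _; rewrite ler_piMr //; case/andP: (r01 (Z v)).
have stay0 : 0 <= (1 - \sum_v w u v) * r X by rewrite mulr_ge0 // subr_ge0.
have stay1 : (1 - \sum_v w u v) * r X <= 1 - \sum_v w u v by rewrite ler_piMr // subr_ge0.
rewrite /moran_jump -/Z; apply/andP; split; lra.
Qed.

Lemma moran_step_bounds r X :
  (forall Y, 0 <= r Y <= 1) -> 0 <= moran_step r X <= 1.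
Proof.
move=> r01; have pr u : 0 <= f X u / \sum_z f X z by rewrite divr_ge0 ?sumr_ge0.
apply/andP; split.
  by apply: sumr_ge0 => u _; rewrite mulr_ge0 //; case/andP: (moran_jump_bounds X u r01).
apply: (@le_trans _ _ (\sum_u f X u / \sum_z f X z)).
  by apply: ler_sum => u _; rewrite ler_piMr //; case/andP: (moran_jump_bounds X u r01).
rewrite -mulr_suml; have [->|F0] := eqVneq (\sum_z f X z) 0; first by rewrite mul0r ler01.
by rewrite divff.
Qed.

Lemma moran_reach_bounds Tgt t X : 0 <= moran_reach w f Tgt t X <= 1.
Proof.
elim: t X => [|t IH] X /=; first by case: (Tgt X); rewrite ?lexx ?ler01.
by case: (Tgt X); [rewrite lexx ler01 | exact: moran_step_bounds].
Qed.

Lemma moran_reach_le_hit Tgt t X : moran_reach w f Tgt t X <= moran_hit w f Tgt X.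
Proof.
apply: sup_upper_bound; last by exists t.
split; first by exists (moran_reach w f Tgt 0 X), 0%N.
by exists 1 => _ [s _ <-]; case/andP: (moran_reach_bounds Tgt s X).
Qed.

Lemma moran_step_ge r Y (a d : R) (u0 v0 : V) :
  (forall Z, 0 <= r Z) -> a <= r Y -> (forall v, a <= r (v |: Y)) ->
  0 <= d -> a + d <= r (v0 |: Y) -> u0 \in Y ->
  (\sum_(u in Y) f Y u) / (\sum_z f Y z) * a
    + f Y u0 / (\sum_z f Y z) * w u0 v0 * d <= moran_step r Y.
Proof.
move=> r0 raY raYv d0 radY u0Y; set F := \sum_z f Y z.
have pr u : 0 <= f Y u / F by rewrite divr_ge0 ?sumr_ge0.
have jump_ge u : u \in Y -> a + w u v0 * d <= moran_jump r Y u.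
  move=> uY; rewrite /moran_jump uY.
  have moved : \sum_v w u v * a + w u v0 * d <= \sum_v w u v * r (v |: Y).
    rewrite (bigD1 v0) //= [X in _ <= X](bigD1 v0) //= addrAC -mulrDr.
    by rewrite lerD ?ler_wpM2l // ler_sum // => v _; rewrite ler_wpM2l.
  have stay : (1 - \sum_v w u v) * a <= (1 - \sum_v w u v) * r Y.
    by rewrite ler_wpM2l // subr_ge0.
  rewrite -mulr_suml in moved; lra.
have jump0 u : 0 <= moran_jump r Y u.
  rewrite /moran_jump addr_ge0 ?sumr_ge0 // => [v _|]; rewrite mulr_ge0 //.
  by rewrite subr_ge0.
rewrite /moran_step [X in _ <= X](bigID (mem Y)) /= -[X in X <= _]addr0 lerD //; last first.
  by rewrite sumr_ge0 // => u _; rewrite mulr_ge0.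
rewrite -/F (bigD1 u0) //= [X in _ <= X](bigD1 u0) //= !(mulrDl, mulr_suml).
have here : f Y u0 / F * (a + w u0 v0 * d) <= f Y u0 / F * moran_jump r Y u0.
  by rewrite ler_wpM2l ?jump_ge.
have elsewhere : \sum_(u in Y | u != u0) f Y u / F * a
    <= \sum_(u in Y | u != u0) f Y u / F * moran_jump r Y u.
  apply: ler_sum => u /andP[uY _]; rewrite ler_wpM2l //.
  by rewrite (le_trans _ (jump_ge u uY)) // lerDl mulr_ge0.
apply: le_trans (lerD here elsewhere).
by rewrite mulrDr mulrA addrAC.
Qed.

End MoranStep.

Section SetCoverWeights.
Variables (R : realType) (U : finType) (S : {set {set U}}).

Lemma sc_w_ge0 (u v : vert S) : 0 <= sc_w R u v.
Proof. by rewrite /sc_w; case: sc_edge; rewrite ?invr_ge0. Qed.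

Lemma sc_w_sum_le1 (u : vert S) : \sum_v sc_w R u v <= 1.
Proof.
rewrite /sc_w -big_mkcond /= sumr_const -/(sc_outdeg u).
have [->|d0] := eqVneq (sc_outdeg u) 0%N; first by rewrite mulr0n ler01.
by rewrite -(mulr_natr (_^-1)) mulVf // pnatr_eq0.
Qed.

Lemma sc_w_edge_ge (A : V1 S) (e : U) : e \in val A ->
  (#|[set: vert S]|%:R)^-1 <= sc_w R (inl A) (inr e).
Proof.
move=> eA; rewrite /sc_w /= eA.
have d0 : (0 < sc_outdeg (inl A : vert S))%N.
  by apply/card_gt0P; exists (inr e); rewrite inE /= eA.
have dn : (sc_outdeg (inl A : vert S) <= #|[set: vert S]|)%N by rewrite cardsT max_card.
by rewrite lef_pV2 ?posrE ?ltr0n ?ler_nat // (leq_trans d0).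
Qed.

End SetCoverWeights.

Section SetCoverFitness.
Variables (R : realType) (U : finType) (S : {set {set U}}) (x y : R).
Hypotheses (hx : 1 <= x) (hy0 : 0 < y) (hy1 : y <= 1).

Lemma sc_fit_ge0 (Y : {set vert S}) (u : vert S) : 0 <= sc_fit x y Y u.
Proof.
have x0 : 0 <= x := le_trans ler01 hx.
by rewrite /sc_fit; case: (u \in Y); case: u => //= _; rewrite ltW.
Qed.

Lemma sc_fit_le (Y : {set vert S}) (u : vert S) : sc_fit x y Y u <= x.
Proof. by rewrite /sc_fit; case: (u \in Y); case: u => //= _; apply: le_trans hx. Qed.

Lemma sc_fit_resident (Y : {set vert S}) (u : vert S) : u \notin Y -> sc_fit x y Y u = 1.
Proof. by rewrite /sc_fit => /negbTE ->. Qed.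

Lemma sc_fit_sum_le (Y : {set vert S}) : \sum_u sc_fit x y Y u <= x * #|[set: vert S]|%:R.
Proof.
by rewrite cardsT -sumr_const mulr_sumr ler_sum // => u _; rewrite mulr1 sc_fit_le.
Qed.

Lemma sc_resident_mass_le (Y : {set vert S}) :
  \sum_u sc_fit x y Y u - \sum_(u in Y) sc_fit x y Y u <= #|[set: vert S]|%:R.
Proof.
rewrite [X in X - _](bigID (mem Y)) /= addrAC subrr add0r.
apply: (@le_trans _ _ (\sum_(u | u \notin Y) 1)).
  by apply: ler_sum => u uY; rewrite sc_fit_resident.
by rewrite sumr_const ler_nat cardsT max_card.
Qed.

End SetCoverFitness.

Section SetCoverTarget.
Variables (U : finType) (S : {set {set U}}).

Definition kept (X Y : {set vert S}) := [forall A : V1 S, (inl A \in X) ==> (inl A \in Y)].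

Definition uncovered (Y : {set vert S}) : {set U} := [set e | inr e \notin Y].

Lemma sc_targetE X Y : sc_target X Y = kept X Y && (#|uncovered Y| == 0%N).
Proof.
rewrite /sc_target andbC cards_eq0; congr (_ && _); apply/forallP/eqP => [inY|unc0 e].
  by apply/setP => e; rewrite !inE inY.
by move/setP/(_ e): unc0; rewrite !inE => /negbFE.
Qed.

Lemma kept_refl X : kept X X.
Proof. by apply/forallP => A; apply/implyP. Qed.

Lemma kept_setU1 X Y v : kept X Y -> kept X (v |: Y).
Proof.
move/forallP=> XY; apply/forallP => A; apply/implyP => /(implyP (XY A)) AY.
by rewrite in_setU1 AY orbT.
Qed.

Lemma uncovered_setU1 Y v : uncovered (v |: Y) \subset uncovered Y.
Proof. by apply/fintype.subsetP => e; rewrite !inE negb_or => /andP[]. Qed.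

Lemma uncovered_setU1r Y e : uncovered (inr e |: Y) = uncovered Y :\ e.
Proof.
apply/setP => e'; rewrite !inE negb_or andbC.
by congr (~~ _ && _); apply/eqP/eqP => [[]|->].
Qed.

End SetCoverTarget.

Section SetCoverReach.
Variables (R : realType) (U : finType) (S : {set {set U}}) (x y : R) (X : {set vert S}).
Hypotheses (hx : 1 <= x) (hy0 : 0 < y) (hy1 : y <= 1).
Hypothesis hcov : forall e : U, exists A : V1 S, inl A \in X /\ e \in val A.

Local Notation n := (#|[set: vert S]|%:R : R).
Local Notation p := (cover_prob x n).
Local Notation m := (1 - (1 - p) * (n * n)^-1).
Local Notation reach := (moran_reach (@sc_w R U S) (sc_fit x y) (sc_target X)).

Lemma card_vert_gt0 (v : vert S) : 0 < n.
Proof. by rewrite ltr0n; apply/card_gt0P; exists v; rewrite inE. Qed.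

Lemma inv_sqr_card_vert_ge0_le1 : 0 <= (n * n)^-1 <= 1.
Proof.
rewrite invr_ge0 mulr_ge0 ?ler0n //=.
case: #|_| => [|N]; first by rewrite mulr0 invr0 ler01.
by rewrite invf_le1 -natrM ?ltr0n // ler1n.
Qed.

Lemma sc_step_ge t k r Y (A0 : V1 S) (e0 : U) :
  (forall Z, 0 <= r Z) -> reach_bound p m t k.+1 <= r Y ->
  (forall v, reach_bound p m t k.+1 <= r (v |: Y)) ->
  reach_bound p m t k <= r (inr e0 |: Y) ->
  inl A0 \in Y -> e0 \in val A0 ->
  reach_bound p m t.+1 k.+1 <= moran_step (@sc_w R U S) (sc_fit x y) r Y.
Proof.
move=> r0 rY rYv rYe A0Y e0A0.
set F := \sum_z sc_fit x y Y z; set M := \sum_(u in Y) sc_fit x y Y u.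
set w0 := sc_w R (inl A0) (inr e0).
have x0 : 0 < x := lt_le_trans ltr01 hx.
have n0 := card_vert_gt0 (inl A0).
have fitA0 : sc_fit x y Y (inl A0) = x by rewrite /sc_fit A0Y.
have xF : x <= F.
  rewrite /F (bigD1 (inl A0)) //= fitA0 lerDl sumr_ge0 // => u _.
  exact: sc_fit_ge0.
have F0 : 0 < F := lt_le_trans x0 xF.
have M0 : 0 <= M by rewrite sumr_ge0 // => u _; exact: sc_fit_ge0.
have MF : M <= F.
  rewrite /F (bigID (mem Y)) /= lerDl sumr_ge0 // => u _; exact: sc_fit_ge0.
have b01 : 0 <= 1 - M / F <= 1.
  by rewrite subr_ge0 ler_pdivrMr // mul1r MF gerDl oppr_le0 divr_ge0 // ltW.
have bnF : 1 - M / F <= n / F.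
  rewrite -{1}(divff (lt0r_neq0 F0)) -mulrBl.
  by apply: ler_wpM2r; [rewrite invr_ge0 ltW | exact: sc_resident_mass_le].
have /andP[p0 p1] := cover_prob_gt0_lt1 x0 n0.
have g01 := inv_sqr_card_vert_ge0_le1; have /andP[g0 _] := g01.
have rate : (n * n)^-1 <= x / F * w0.
  exact: inv_sqr_le_rate n0 F0 (sc_fit_sum_le hx hy1 Y) (sc_w_edge_ge R e0A0).
apply: le_trans (@reach_bound_step R p _ (1 - M / F) (x / F * w0) _ t k _ g01 erefl _ b01 _) _.
- by rewrite p0 ltW.
- exact: le_trans (ler_piMl g0 (ltW p1)) rate.
- exact: cover_prob_balance x0 n0 F0 (sc_w_edge_ge R e0A0) bnF.
have d0 : 0 <= reach_bound p m t k - reach_bound p m t k.+1.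
  by rewrite subr_ge0 reach_bound_homo ?p0 ?ltW.
have := moran_step_ge (@sc_w_ge0 R U S) (@sc_w_sum_le1 R U S) (sc_fit_ge0 hx hy0)
  r0 rY rYv d0 _ A0Y.
rewrite addrC subrK => /(_ _ rYe).
by rewrite -/F -/M fitA0 subKr.
Qed.

Lemma sc_reach_ge t Y : kept X Y -> reach_bound p m t #|uncovered Y| <= reach t Y.
Proof.
have reach_ge0 s Z : 0 <= reach s Z.
  by case/andP: (moran_reach_bounds (@sc_w_ge0 R U S) (@sc_w_sum_le1 R U S)
    (sc_fit_ge0 hx hy0) (sc_target X) s Z).
have p01 := cover_prob_ge0_le1 (le_trans ler01 hx) (ler0n _ #|[set: vert S]|).
have m0 := decay_ge0 p01 inv_sqr_card_vert_ge0_le1.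
elim: t Y => [|t IH] Y keptY; first by rewrite reach_bound0.
rewrite moran_reachS; case: ifPn => [_|]; first exact: reach_bound_le1.
rewrite sc_targetE keptY /= -lt0n => /card_gt0P[e0 e0Y].
have [A0 [A0X e0A0]] := hcov e0.
have A0Y : inl A0 \in Y := implyP (forallP keptY A0) A0X.
have kY : #|uncovered Y| = #|uncovered (inr e0 |: Y)|.+1.
  by rewrite uncovered_setU1r (cardsD1 e0) e0Y.
rewrite kY; apply: (sc_step_ge _ _ _ _ A0Y e0A0) => // [|v|].
- by rewrite -kY IH.
- rewrite -kY; apply: le_trans (IH _ (kept_setU1 v keptY)).
  by rewrite reach_bound_homo ?subset_leq_card ?uncovered_setU1.
- exact: IH (kept_setU1 _ keptY).
Qed.

Lemma sc_hit_ge Y : kept X Y ->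
  p ^+ #|uncovered Y| <= moran_hit (@sc_w R U S) (sc_fit x y) (sc_target X) Y.
Proof.
move=> keptY.
have reach_le_hit := moran_reach_le_hit (@sc_w_ge0 R U S) (@sc_w_sum_le1 R U S)
  (sc_fit_ge0 hx hy0) (sc_target X).
have [unc0|/card_gt0P[e0 _]] := posnP #|uncovered Y|.
  by apply: le_trans (reach_le_hit 0%N Y); rewrite unc0 /= sc_targetE keptY unc0.
have n0 := card_vert_gt0 (inr e0).
have /andP[p0 p1] := cover_prob_gt0_lt1 (lt_le_trans ltr01 hx) n0.
have m01 : 0 <= m < 1.
  apply/andP; split; last by rewrite decay_lt1 // invr_gt0 mulr_gt0.
  by apply: decay_ge0 inv_sqr_card_vert_ge0_le1; rewrite !ltW.
apply: (le_of_forall_sub_expr_le m01) => t.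
apply: le_trans (le_trans (sc_reach_ge t keptY) (reach_le_hit t Y)).
by rewrite le_max lexx.
Qed.

End SetCoverReach.

Theorem lemma4 (R : realType) (U : finType) (S : {set {set U}}) (x y : R)
  (hU : \bigcup_(A in S) A = [set: U])
  (hx : 1 <= x) (hy0 : 0 < y) (hy1 : y <= 1)
  (X : {set vert S})
  (hcov : forall e : U, exists A : V1 S, inl A \in X /\ e \in val A) :
  let n : R := (#|[set: vert S]|)%:R in
  ((x / n) / (x / n + n)) ^+ #|[set: U]|
    <= moran_hit (@sc_w R U S) (sc_fit x y) (sc_target X) X.
Proof.
change (cover_prob x #|[set: vert S]|%:R ^+ #|[set: U]|
  <= moran_hit (@sc_w R U S) (sc_fit x y) (sc_target X) X).
apply: le_trans (sc_hit_ge hx hy0 hy1 hcov (kept_refl X)).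
have /andP[p0 p1] := cover_prob_ge0_le1 (le_trans ler01 hx) (ler0n _ #|[set: vert S]|).
by rewrite ler_wiXn2l // subset_leq_card // subsetT.
Qed.
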